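(* Let $G$ be an arbitrary group and let $S$ be a nonempty finite subset of $G$. Then every complement $C$ of $S$ in $G$ (i.e. every nonempty $C\subseteq G$ with $SC=G$) contains a minimal complement of $S$ in $G$.
   Context: For nonempty subsets $A,B$ of a group $G$, $AB=\{ab: a\in A, b\in B\}$. A nonempty set $W'\subseteq G$ is a complement to a nonempty set $W\subseteq G$ if $WW'=G$; it is a minimal complement if moreover $W(W'\setminus\{w'\})\neq G$ for every $w'\in W'$, i.e. no proper subset of $W'$ is a complement to $W$. *)

From Stdlib Require Import List.

Record Group := {
  carrier :> Type;
  gmul : carrier -> carrier -> carrier;
  gone : carrier;
  ginv : carrier -> carrier;
  gmulA : forall x y z, gmul x (gmul y z) = gmul (gmul x y) z;
  gmul1 : forall x, gmul gone x = x;
  gmulV : forall x, gmul (ginv x) x = gone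
}.

Definition subset (G : Group) := G -> Prop.

Definition nonempty {G : Group} (A : subset G) : Prop := exists x, A x.

Definition finite_subset {G : Group} (A : subset G) : Prop :=
  exists l : list G, forall x, A x <-> In x l.

Definition included {G : Group} (A B : subset G) : Prop := forall x, A x -> B x.

Definition setmul {G : Group} (A B : subset G) : subset G :=
  fun g => exists a b, A a /\ B b /\ g = gmul G a b.

Definition setD1 {G : Group} (A : subset G) (w : G) : subset G :=
  fun x => A x /\ x <> w.

Definition is_whole {G : Group} (A : subset G) : Prop := forall g : G, A g.

Definition is_complement {G : Group} (W W' : subset G) : Prop :=
  nonempty W' /\ is_whole (setmul W W').

Definition is_minimal_complement {G : Group} (W W' : subset G) : Prop :=
  is_complement W W' /\
  forall w', W' w' -> ~ is_whole (setmul W (setD1 W' w')).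

(* Order the complements of S contained in C by inclusion and apply Zorn's
   lemma downwards: a minimal element is a minimal complement.  The point is
   that the intersection of a nonempty chain of complements is again a
   complement.  Given g, for each s in S at most one c, namely s^-1 g,
   satisfies s c = g; if every such candidate were missing from some member of
   the chain, then, S being finite, a single member of the chain would miss
   them all, and g would not lie in S times that member. *)

From mathcomp Require Import ssreflect ssrfun ssrbool eqtype classical_sets boolp.
From Stdlib Require Import List.

Set Implicit Arguments.
Unset Strict Implicit.
Unset Printing Implicit Defensive.

Local Open Scope classical_set_scope.

Lemma Zorn_bigcap (T : Type) (P : set (set T)) (C : set T) :
  P C ->
  (forall F : set (set T), F `<=` P -> F !=set0 ->
     total_on F classical_sets.subset -> P (\bigcap_(X in F) X)) ->
  exists A, P A /\ forall B, B `<` A -> ~ P B.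
Proof.
move=> PC chainP.
(* Zorn_bigcup is applied to the sets D removed from C. *)
have [|D [PCD Dmax]] := Zorn_bigcup (P := fun D => P (C `\` D)).
  move=> F FP Ftot; have [->|/set0P F0] := eqVneq F set0.
    by rewrite bigcup_set0 setD0.
  have -> : C `\` \bigcup_(D in F) D = \bigcap_(X in [set C `\` D | D in F]) X.
    rewrite bigcap_image; apply/seteqP; split=> [x [Cx nFx] D FD|x Fx].
      by split=> // Dx; apply: nFx; exists D.
    have [D FD] := F0; split; first by case: (Fx D FD).
    by move=> [D' FD' D'x]; case: (Fx D' FD').
  apply: chainP; first by move=> _ [D FD <-]; exact: FP.
    by have [D FD] := F0; exists (C `\` D), D.
  move=> _ _ [D FD <-] [D' FD' <-].
  by have [DD'|D'D] := Ftot D D' FD FD'; [right|left]; apply: setDS.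
exists (C `\` D); split=> // B [BA nAB] PB.
apply: (Dmax (D `|` (C `\` B))).
  split=> [|sub]; first exact: subsetUl.
  apply: nAB => x [Cx nDx]; apply: contrapT => nBx.
  by apply: nDx; apply: sub; right.
suff -> : C `\` (D `|` (C `\` B)) = B by [].
rewrite setDUr setDD setIA; apply: setIidr => x Bx.
by have [Cx _] := BA x Bx; split; [exact: BA|].
Qed.

Lemma chain_lower_bound_seq (T I : Type) (F : set (set T)) (R : I -> set T)
    (l : list I) :
  F !=set0 -> total_on F classical_sets.subset ->
  (forall i, In i l -> exists2 Y, F Y & Y `<=` R i) ->
  exists2 X, F X & forall i, In i l -> X `<=` R i.
Proof.
move=> [X0 FX0] Ftot; elim: l => [|i l IHl] lowR; first by exists X0.
have [Y FY YR] := lowR i (or_introl erefl).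
have [X FX XR] := IHl (fun j lj => lowR j (or_intror lj)).
have [XY|YX] := Ftot X Y FX FY.
- by exists X => // j [<-|lj]; [exact: subset_trans YR|exact: XR].
- by exists Y => // j [<-|lj]; [|exact: subset_trans (XR j lj)].
Qed.

Lemma gmulI (G : Group) (x : G) : injective (gmul G x).
Proof.
move=> y z xyz.
by rewrite -[y]gmul1 -[z]gmul1 -(gmulV G x) -!gmulA xyz.
Qed.

Lemma whole_setmul_bigcap (G : Group) (S : subset G) (F : set (set G)) :
  finite_subset S -> F !=set0 -> total_on F classical_sets.subset ->
  (forall X, F X -> is_whole (setmul S X)) ->
  is_whole (setmul S (\bigcap_(X in F) X)).
Proof.
move=> [l Sl] F0 Ftot FS g; apply: contrapT => notSFg.
have [|X FX XR] :=
  chain_lower_bound_seq (R := fun s c => gmul G s c <> g) (l := l) F0 Ftot.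
  move=> s /Sl Ss.
  have [[c scg]|nocand] := pselect (exists c, gmul G s c = g); last first.
    by case: F0 => Y FY; exists Y => // c _ scg; apply: nocand; exists c.
  have /existsNP[Y /not_implyP[FY nYc]] : ~ (\bigcap_(X in F) X) c.
    by move=> Fc; apply: notSFg; exists s, c.
  exists Y => // c' Yc' sc'g; apply: nYc.
  by have -> : c = c' by apply: (@gmulI G s); rewrite scg sc'g.
have [s [c [Ss [Xc gsc]]]] := FS X FX g.
by apply: (XR s (proj1 (Sl s) Ss) c Xc); rewrite gsc.
Qed.

Theorem theorem1p1 (G : Group) (S : subset G) :
  nonempty S -> finite_subset S ->
  forall C : subset G, is_complement S C ->
  exists M : subset G, included M C /\ is_minimal_complement S M.
Proof.
move=> _ finS C [_ SC].
have [|F FP F0 Ftot|M [[MC SM] Mmin]] :=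
  Zorn_bigcap (P := fun M => M `<=` C /\ is_whole (setmul S M)) (C := C).
- by split.
- split; last by apply: whole_setmul_bigcap => // X /FP[].
  by case: F0 => X FX; apply: subset_trans (FP X FX).1; exact: bigcap_inf.
exists M; split=> //; split.
  by split=> //; have [_ [c [_ [Mc _]]]] := SM (gone G); exists c.
move=> w Mw SMw; apply: (Mmin (setD1 M w)); last first.
  by split=> // x [Mx _]; exact: MC.
split=> [x []//|MMw].
by have [] := MMw w Mw.
Qed.
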